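(* Fix integers $n\ge2$ and $1\le r\le n/2$. For every integer $2\le x\le n$, \[ q_r(x)\le\Big(1+\frac{r^x}{(n-r)^x}\Big)\Big(1-\frac xn\Big)^r \quad\text{and}\quad q_r(x)\le 1-2\frac rn\Big(1-\frac rn\Big). \] Furthermore, for any random variable $X$ with values in $\{0,\dots,n\}$, \[ \mathbb{E}q_r(X)\le 1-\frac rn\mathbb{E}X1(X\ge2)+\frac{r^2}{(n-r)^2}\mathbb{P}(X\ge2)+\frac12\frac{r^2}{n^2}\mathbb{E}X^21(X\ge2) \] and \[ \mathbb{E}q_r(X)\le\mathbb{P}(X<2)+e^{-2\frac rn(1-\frac rn)}\mathbb{P}(X\ge2). \]
   Context: For integers $1\le r\le n/2$ and $0\le x\le n$, $q_r(x)$ denotes the probability that a subset of size $x$ sampled uniformly at random from $\{1,\dots,n\}$ is either fully contained in $\{1,\dots,r\}$ or fully contained in $\{r+1,\dots,n\}$ (so $q_r(x)=1$ for $x\le1$). *)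

From HB Require Import structures.
From mathcomp Require Import all_boot all_order all_algebra.
From mathcomp Require Import all_classical all_reals all_analysis.
Set Implicit Arguments. Unset Strict Implicit. Unset Printing Implicit Defensive.
Import Order.TTheory GRing.Theory Num.Theory.
Local Open Scope ring_scope.

(* The ground set {1,...,n} is modelled by 'I_n = {0,...,n-1};
   {1,...,r} corresponds to the first r elements [set i | i < r]. *)
Definition lowerPart (n r : nat) : {set 'I_n} := [set i : 'I_n | (i < r)%N].
Definition upperPart (n r : nat) : {set 'I_n} := [set i : 'I_n | (r <= i)%N].

(* q_r(x): probability that a uniformly random x-subset of an n-set lies
   entirely in {1..r} or entirely in {r+1..n}. *)
Definition qr (R : realType) (n r x : nat) : R :=
  #|[set A : {set 'I_n} | (#|A| == x) &&
       ((A \subset lowerPart n r) || (A \subset upperPart n r))]|%:R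
  / #|[set A : {set 'I_n} | #|A| == x]|%:R.

(* A random variable X with values in {0,...,n} is described by its law
   p : 'I_n.+1 -> R (p i = P(X = i)). *)
Definition is_law (R : realType) (n : nat) (p : 'I_n.+1 -> R) : Prop :=
  (forall i, 0 <= p i) /\ \sum_(i < n.+1) p i = 1.

From HB Require Import structures.
From mathcomp Require Import all_boot all_order all_algebra.
From mathcomp Require Import all_classical all_reals all_analysis.
From mathcomp Require Import ring lra zify.
Import Order.TTheory GRing.Theory Num.Theory.
Local Open Scope ring_scope.

(* Counting x-subsets of the two blocks gives
     q_r(x) <= (C(r,x) + C(n-r,x)) / C(n,x).
   Three elementary binomial facts then bound this ratio:
   - C(r,x) <= (r/(n-r))^x C(n-r,x), since r <= n-r;
   - C(n-r,x)/C(n,x) <= (1 - x/n)^r, by peeling off one element at a time;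
   - C(m,x)/C(n,x) is nonincreasing in x for m <= n, so for x >= 2 the ratio
     is at most (C(r,2) + C(n-r,2))/C(n,2) <= 1 - 2(r/n)(1-r/n);
   these yield the two pointwise bounds.  The second-order Bernoulli bound
   (1-s)^k <= 1 - ks + k^2 s^2/2 and 1 + u <= e^u turn them into a bound
   quadratic in x and an exponential bound.  Finally, since q_r <= 1, the
   expectation bounds follow by bounding q_r(X) by 1 on {X < 2} and by the
   pointwise bounds on {X >= 2}. *)

Lemma bin_mul_expn_le a b x : (a <= b)%N -> ('C(a, x) * b ^ x <= a ^ x * 'C(b, x))%N.
Proof.
move=> hab; elim: x => [|x IH]; first by rewrite !bin0 !expn0.
rewrite -(leq_pmul2l (ltn0Sn x)).
have -> : (x.+1 * ('C(a, x.+1) * b ^ x.+1) = ((a - x) * b) * ('C(a, x) * b ^ x))%N.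
  by rewrite mulnA mul_bin_left expnS; ring.
have -> : (x.+1 * (a ^ x.+1 * 'C(b, x.+1)) = (a * (b - x)) * (a ^ x * 'C(b, x)))%N.
  by rewrite mulnCA mul_bin_left expnS; ring.
by apply: leq_mul => //; nia.
Qed.

Lemma bin_ratio_step m n x : (m <= n)%N ->
  ('C(m, x.+1) * 'C(n, x) <= 'C(m, x) * 'C(n, x.+1))%N.
Proof.
move=> hmn; rewrite -(leq_pmul2l (ltn0Sn x)).
have -> : (x.+1 * ('C(m, x.+1) * 'C(n, x)) = (m - x) * ('C(m, x) * 'C(n, x)))%N.
  by rewrite mulnA mul_bin_left; ring.
have -> : (x.+1 * ('C(m, x) * 'C(n, x.+1)) = (n - x) * ('C(m, x) * 'C(n, x)))%N.
  by rewrite mulnCA mul_bin_left; ring.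
by apply: leq_mul => //; lia.
Qed.

Lemma bin_ratio_le2 m n x : (m <= n)%N -> (2 <= x)%N -> (x <= n)%N ->
  ('C(m, x) * 'C(n, 2) <= 'C(m, 2) * 'C(n, x))%N.
Proof.
move=> hmn; elim: x => [|x IH] // h2 hxn.
have [hx|hx] := ltnP x 2; first by have -> : x = 1%N by lia.
have hCnx : (0 < 'C(n, x))%N by rewrite bin_gt0; lia.
rewrite -(leq_pmul2r hCnx).
apply: (@leq_trans ('C(m, x) * 'C(n, x.+1) * 'C(n, 2))).
  by rewrite mulnAC leq_mul2r bin_ratio_step ?orbT.
by rewrite mulnAC [X in (_ <= X)%N]mulnAC leq_mul2r IH ?orbT //; lia.
Qed.

Lemma bin2_natr (R : realType) m : 2 * ('C(m, 2)%:R : R) = m%:R * (m%:R - 1).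
Proof.
case: m => [|m]; first by rewrite mul0r bin0n mulr0.
have := mul_bin_diag m.+1 1; rewrite bin1 => /(congr1 (fun k => k%:R : R)).
by rewrite !natrM => <-; rewrite -natr1 addrK mulrC.
Qed.

Lemma card_lowerPart n r : (r <= n)%N -> #|lowerPart n r| = r.
Proof.
move=> hrn.
have -> : lowerPart n r = [set widen_ord hrn i | i in [set: 'I_r]].
  apply/setP => i; rewrite !inE; apply/idP/imsetP.
    by move=> hi; exists (Ordinal hi); rewrite ?inE //; apply: val_inj.
  by case=> j _ ->; rewrite /= ltn_ord.
rewrite card_imset ?cardsT ?card_ord //.
by move=> a b /(congr1 val) /= /val_inj.
Qed.

Lemma card_upperPart n r : (r <= n)%N -> #|upperPart n r| = (n - r)%N.
Proof.
move=> hrn.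
have -> : upperPart n r = ~: lowerPart n r by apply/setP => i; rewrite !inE leqNgt.
by have := cardsC (lowerPart n r); rewrite card_lowerPart // card_ord; lia.
Qed.

Lemma qr_le_binomials (R : realType) n r x : (r <= n)%N ->
  qr R n r x <= ('C(r, x) + 'C(n - r, x))%:R / 'C(n, x)%:R.
Proof.
move=> hrn; rewrite /qr card_draws card_ord.
apply: ler_wpM2r; first by rewrite invr_ge0 ler0n.
have lowC := cards_draws (lowerPart n r) x; rewrite card_lowerPart // in lowC.
have upC := cards_draws (upperPart n r) x; rewrite card_upperPart // in upC.
rewrite ler_nat -lowC -upC; apply: leq_trans (leq_card_setU _ _).
apply: subset_leq_card; apply/fintype.subsetP => A; rewrite !inE.
by case/andP => ->; case/orP => ->; rewrite ?orbT.
Qed.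

Lemma qr_le1 (R : realType) n r x : qr R n r x <= 1.
Proof.
rewrite /qr card_draws card_ord.
have [->|hC] := eqVneq 'C(n, x) 0%N; first by rewrite invr0 mulr0.
rewrite ler_pdivrMr ?ltr0n ?lt0n // mul1r ler_nat -[X in 'C(X, _)]card_ord.
rewrite -card_draws; apply: subset_leq_card; apply/fintype.subsetP => A.
by rewrite !inE; case/andP.
Qed.

Lemma bin_ratio_le_pow (R : realType) n k x : (k <= n)%N -> (x <= n)%N ->
  'C(n - k, x)%:R / 'C(n, x)%:R <= (1 - x%:R / n%:R) ^+ k :> R.
Proof.
move=> + hxn; elim: k => [|k IH] hk.
  by rewrite subn0 expr0 divff // pnatr_eq0 -lt0n bin_gt0.
have hm : (0 < n - k)%N by lia.
have hm0 : 0 < ((n - k)%:R : R) by rewrite ltr0n.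
have peel : ('C(n - k.+1, x)%:R : R) = (n - k - x)%:R / (n - k)%:R * 'C(n - k, x)%:R.
  have -> : (n - k.+1 = (n - k).-1)%N by lia.
  apply: (@mulfI _ (n - k)%:R); first by rewrite gt_eqF.
  by rewrite -natrM mul_bin_down natrM mulrA mulrCA divff ?mulr1 // gt_eqF.
have ratio0 : 0 <= 'C(n - k, x)%:R / 'C(n, x)%:R :> R by rewrite divr_ge0 ?ler0n.
rewrite peel -mulrA exprS; apply: ler_pM => //; last by apply: IH; lia.
have [hxm|hxm] := leqP x (n - k); last first.
  have -> : (n - k - x = 0)%N by lia.
  by rewrite mul0r subr_ge0 ler_pdivrMr ?ltr0n ?mul1r ?ler_nat //; lia.
rewrite natrB // mulrBl divff ?gt_eqF // lerD2l lerN2.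
apply: ler_wpM2l => //; rewrite lef_pV2 ?posrE ?ltr0n ?ler_nat //; lia.
Qed.

Lemma pow_one_sub_le (R : realType) (s : R) k : 0 <= s -> s <= 1 ->
  (1 - s) ^+ k <= 1 - k%:R * s + (k%:R ^+ 2 * s ^+ 2) / 2.
Proof.
move=> hs0 hs1; elim: k => [|k IH].
  by rewrite expr0 mul0r subr0 expr0n /= !mul0r addr0.
rewrite exprS; apply: le_trans (ler_wpM2l (_ : 0 <= 1 - s) IH) _; first lra.
have hk : 0 <= (k%:R : R) ^+ 2 * s ^+ 3 by rewrite mulr_ge0 ?exprn_ge0 ?ler0n.
have hs2 : 0 <= s ^+ 2 by rewrite exprn_ge0.
rewrite -natr1 -subr_ge0.
set gap := (X in 0 <= X).
have -> : gap = (s ^+ 2 + (k%:R : R) ^+ 2 * s ^+ 3) / 2 by rewrite /gap; field.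
by rewrite divr_ge0 // addr_ge0.
Qed.

Section PointwiseBounds.
Variables (R : realType) (n r : nat).
Hypothesis hr2 : (2 * r <= n)%N.

Lemma qr_le_pow (x : nat) : (0 < n)%N -> (x <= n)%N ->
  qr R n r x <= (1 + (r%:R ^+ x) / ((n - r)%:R ^+ x)) * (1 - x%:R / n%:R) ^+ r.
Proof.
move=> hn hx; have hrn : (r <= n)%N by lia.
apply: le_trans (qr_le_binomials _ _ _ x hrn) _.
have hCn : 0 < ('C(n, x)%:R : R) by rewrite ltr0n bin_gt0.
have hnr : 0 < ((n - r)%:R ^+ x : R) by rewrite exprn_gt0 // ltr0n; lia.
set c := r%:R ^+ x / (n - r)%:R ^+ x.
have hc : 0 <= c by rewrite divr_ge0 ?exprn_ge0 ?ler0n.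
have lowC : ('C(r, x)%:R : R) <= c * 'C(n - r, x)%:R.
  rewrite mulrAC ler_pdivlMr // -!natrX -!natrM ler_nat.
  by apply: bin_mul_expn_le; lia.
have upC := @bin_ratio_le_pow R n r x hrn hx.
rewrite natrD mulrDl; apply: (@le_trans _ _ ((1 + c) * ('C(n - r, x)%:R / 'C(n, x)%:R))).
  by rewrite mulrDl mul1r [leRHS]addrC lerD2r mulrA ler_wpM2r // invr_ge0 ltW.
by apply: ler_wpM2l => //; rewrite addr_ge0.
Qed.

Lemma qr_le_pair (x : nat) : (2 <= x)%N -> (x <= n)%N ->
  qr R n r x <= 1 - 2 * (r%:R / n%:R) * (1 - r%:R / n%:R).
Proof.
move=> h2 hx; have hrn : (r <= n)%N by lia.
apply: le_trans (qr_le_binomials _ _ _ x hrn) _.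
have hCn : 0 < ('C(n, x)%:R : R) by rewrite ltr0n bin_gt0.
have hCn2 : 0 < ('C(n, 2)%:R : R) by rewrite ltr0n bin_gt0; lia.
apply: (@le_trans _ _ (('C(r, 2) + 'C(n - r, 2))%:R / 'C(n, 2)%:R)).
  rewrite ler_pdivrMr // mulrAC ler_pdivlMr // -!natrM ler_nat !mulnDl.
  by apply: leq_add; apply: bin_ratio_le2 => //; lia.
rewrite ler_pdivrMr // natrD.
have lowC := bin2_natr R r; have upC := bin2_natr R (n - r); have allC := bin2_natr R n.
rewrite natrB // in upC.
set t := r%:R / n%:R.
have hn : 0 < n%:R :> R by rewrite ltr0n; lia.
have ht : (r%:R : R) = t * n%:R by rewrite /t mulrVK ?unitfE ?gt_eqF.
have ht0 : 0 <= t by rewrite /t divr_ge0 ?ler0n.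
have ht1 : t <= 1 by rewrite /t ler_pdivrMr // mul1r ler_nat.
have hgap : 0 <= n%:R * (t * (1 - t)) :> R.
  by rewrite !mulr_ge0 ?subr_ge0 // ltW.
rewrite ht in lowC upC; nra.
Qed.

Lemma qr_le_quadratic (x : nat) : (2 <= x)%N -> (x <= n)%N ->
  qr R n r x <= 1 - r%:R / n%:R * x%:R + (r%:R ^+ 2) / ((n - r)%:R ^+ 2)
                + 2^-1 * ((r%:R ^+ 2) / (n%:R ^+ 2)) * (x%:R ^+ 2).
Proof.
move=> h2 hx; have hn : (0 < n)%N by lia.
apply: le_trans (qr_le_pow x hn hx) _.
have hnr : 0 < ((n - r)%:R : R) by rewrite ltr0n; lia.
have hn0 : 0 < (n%:R : R) by rewrite ltr0n.
have hs0 : 0 <= x%:R / n%:R :> R by rewrite divr_ge0 ?ler0n.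
have hs1 : x%:R / n%:R <= 1 :> R by rewrite ler_pdivrMr // mul1r ler_nat.
have bern := @pow_one_sub_le R _ r hs0 hs1.
have hP0 : 0 <= (1 - x%:R / n%:R) ^+ r :> R by rewrite exprn_ge0 // subr_ge0.
have hP1 : (1 - x%:R / n%:R) ^+ r <= 1 :> R by rewrite exprn_ile1 // subr_ge0.
(* (r/(n-r))^x <= (r/(n-r))^2 since r/(n-r) <= 1 and x >= 2 *)
have hc : r%:R ^+ x / (n - r)%:R ^+ x <= (r%:R ^+ 2) / ((n - r)%:R ^+ 2) :> R.
  have hq0 : 0 <= r%:R / (n - r)%:R :> R by rewrite divr_ge0 ?ler0n.
  have hq1 : r%:R / (n - r)%:R <= 1 :> R by rewrite ler_pdivrMr // mul1r ler_nat; lia.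
  by rewrite -!expr_div_n; apply: ler_wiXn2l.
have hc0 : 0 <= r%:R ^+ x / (n - r)%:R ^+ x :> R by rewrite -expr_div_n exprn_ge0.
set c := r%:R ^+ x / (n - r)%:R ^+ x in hc hc0 *.
set P := (1 - x%:R / n%:R) ^+ r in bern hP0 hP1 *.
have hcP : c * P <= c by rewrite ler_piMr.
have -> : 1 - r%:R / n%:R * x%:R + r%:R ^+ 2 / (n - r)%:R ^+ 2
            + 2^-1 * (r%:R ^+ 2 / n%:R ^+ 2) * x%:R ^+ 2
  = (1 - r%:R * (x%:R / n%:R) + (r%:R ^+ 2 * (x%:R / n%:R) ^+ 2) / 2)
    + r%:R ^+ 2 / (n - r)%:R ^+ 2 :> R.
  by field; rewrite !gt_eqF.
lra.
Qed.

Lemma qr_le_expR (x : nat) : (2 <= x)%N -> (x <= n)%N ->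
  qr R n r x <= expR (- (2 * (r%:R / n%:R) * (1 - r%:R / n%:R))).
Proof.
move=> h2 hx; apply: le_trans (qr_le_pair x h2 hx) _.
exact: expR_ge1Dx.
Qed.

End PointwiseBounds.

Lemma sum_split2 (R : realType) n (F : 'I_n.+1 -> R) :
  \sum_(i < n.+1) F i = \sum_(i < n.+1 | (i < 2)%N) F i + \sum_(i < n.+1 | (2 <= i)%N) F i.
Proof.
rewrite (bigID (fun i : 'I_n.+1 => (i < 2)%N)) /=; congr (_ + _).
by apply: eq_bigl => i; rewrite -leqNgt.
Qed.

Lemma expect_le_split (R : realType) n (p f g : 'I_n.+1 -> R) :
  (forall i, 0 <= p i) -> (forall i, f i <= 1) ->
  (forall i : 'I_n.+1, (2 <= i)%N -> f i <= g i) ->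
  \sum_(i < n.+1) p i * f i
    <= \sum_(i < n.+1 | (i < 2)%N) p i + \sum_(i < n.+1 | (2 <= i)%N) p i * g i.
Proof.
move=> hp hf1 hfg; rewrite sum_split2; apply: lerD.
  by apply: ler_sum => i _; rewrite -[leRHS]mulr1 ler_wpM2l.
by apply: ler_sum => i hi; rewrite ler_wpM2l ?hfg.
Qed.

Theorem mainTheorem12 (R : realType) (n r : nat)
  (hn : (2 <= n)%N) (hr1 : (1 <= r)%N) (hr2 : (2 * r <= n)%N) :
  (forall x : nat, (2 <= x)%N -> (x <= n)%N ->
     qr R n r x <= (1 + (r%:R ^+ x) / ((n - r)%:R ^+ x)) * (1 - x%:R / n%:R) ^+ r
  /\ qr R n r x <= 1 - 2 * (r%:R / n%:R) * (1 - r%:R / n%:R))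
  /\
  (forall p : 'I_n.+1 -> R, is_law p ->
     \sum_(i < n.+1) p i * qr R n r i
       <= 1 - r%:R / n%:R * (\sum_(i < n.+1 | (2 <= i)%N) p i * i%:R)
            + (r%:R ^+ 2) / ((n - r)%:R ^+ 2) * (\sum_(i < n.+1 | (2 <= i)%N) p i)
            + 2^-1 * ((r%:R ^+ 2) / (n%:R ^+ 2))
                * (\sum_(i < n.+1 | (2 <= i)%N) p i * (i%:R ^+ 2))
  /\ \sum_(i < n.+1) p i * qr R n r i
       <= (\sum_(i < n.+1 | (i < 2)%N) p i)
          + expR (- (2 * (r%:R / n%:R) * (1 - r%:R / n%:R)))
              * (\sum_(i < n.+1 | (2 <= i)%N) p i)).
Proof.
have hin (i : 'I_n.+1) : (i <= n)%N by rewrite -ltnS ltn_ord.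
split=> [x h2 hx|p [hp0 hp1]].
  by split; [apply: qr_le_pow => //; lia | exact: qr_le_pair].
have hq1 (i : 'I_n.+1) : qr R n r i <= 1 by exact: qr_le1.
split.
  set a := r%:R / n%:R; set c := r%:R ^+ 2 / (n - r)%:R ^+ 2.
  set d := 2^-1 * (r%:R ^+ 2 / n%:R ^+ 2).
  have hquad (i : 'I_n.+1) : (2 <= i)%N ->
      qr R n r i <= 1 - a * i%:R + c + d * i%:R ^+ 2.
    by move=> hi; apply: qr_le_quadratic.
  apply: le_trans (@expect_le_split R n p (fun i => qr R n r i)
    (fun i => 1 - a * i%:R + c + d * i%:R ^+ 2) hp0 hq1 hquad) _.
  have total := @sum_split2 R n p; rewrite hp1 in total.
  have -> : \sum_(i < n.+1 | (2 <= i)%N) p i * (1 - a * i%:R + c + d * i%:R ^+ 2)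
      = \sum_(i < n.+1 | (2 <= i)%N) p i - a * (\sum_(i < n.+1 | (2 <= i)%N) p i * i%:R)
        + c * (\sum_(i < n.+1 | (2 <= i)%N) p i)
        + d * (\sum_(i < n.+1 | (2 <= i)%N) p i * i%:R ^+ 2).
    by rewrite !mulr_sumr -sumrB -!big_split /=; apply: eq_bigr => i _; ring.
  lra.
set e := expR (- (2 * (r%:R / n%:R) * (1 - r%:R / n%:R))).
have hexp (i : 'I_n.+1) : (2 <= i)%N -> qr R n r i <= e.
  by move=> hi; exact: (@qr_le_expR R n r hr2 i hi (hin i)).
apply: le_trans (@expect_le_split R n p (fun i => qr R n r i) (fun=> e) hp0 hq1 hexp) _.
by rewrite -mulr_suml mulrC.
Qed.
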